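(* Let $h=\sqrt{3}/2$ and consider the similarities of $\mathbb{R}^2$ $$S_1(\vec x)=\tfrac14\vec x,\quad S_2(\vec x)=\tfrac12\vec x+(1,0),\quad S_3(\vec x)=\tfrac14\vec x+(3,0),\quad S_4(\vec x)=\tfrac14\vec x+(1,2h),\quad S_5(\vec x)=\tfrac14\vec x+(\tfrac32,3h).$$ Let $K\subset\mathbb{R}^2$ be the unique nonempty compact set with $K=\bigcup_{j=1}^5 S_j(K)$. Then $K$ is a dendrite (a locally connected continuum containing no simple closed curve). *)

From HB Require Import structures.
From mathcomp Require Import all_boot all_order all_algebra.
From mathcomp Require Import all_classical all_reals all_analysis.
Set Implicit Arguments. Unset Strict Implicit. Unset Printing Implicit Defensive.
Import Order.TTheory GRing.Theory Num.Theory.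
Import numFieldNormedType.Exports.
Local Open Scope classical_set_scope.
Local Open Scope ring_scope.

Section Defs.
Variable R : realType.

Definition hh : R := Num.sqrt 3 / 2.

Definition S1 (p : R * R) : R * R := (p.1 / 4, p.2 / 4).
Definition S2 (p : R * R) : R * R := (p.1 / 2 + 1, p.2 / 2).
Definition S3 (p : R * R) : R * R := (p.1 / 4 + 3, p.2 / 4).
Definition S4 (p : R * R) : R * R := (p.1 / 4 + 1, p.2 / 4 + 2 * hh).
Definition S5 (p : R * R) : R * R := (p.1 / 4 + 3 / 2, p.2 / 4 + 3 * hh).

Definition ifs_invariant (K : set (R * R)) : Prop :=
  K = S1 @` K `|` S2 @` K `|` S3 @` K `|` S4 @` K `|` S5 @` K.

(* A continuum: nonempty compact connected set (the plane is metric). *)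
Definition continuum (K : set (R * R)) : Prop :=
  K !=set0 /\ compact K /\ connected K.

Definition locally_connected_set (K : set (R * R)) : Prop :=
  forall x U, K x -> open U -> U x ->
    exists W : set (R * R), [/\ open W, W x, W `&` K `<=` U & connected (W `&` K)].

Definition unit_circle : set (R * R) := [set p | p.1 ^+ 2 + p.2 ^+ 2 = 1].

(* A simple closed curve: a homeomorphic image of the circle, i.e. the image of
   the circle under a continuous injective map (homeomorphism onto the image
   since the circle is compact and the plane Hausdorff). *)
Definition simple_closed_curve (C : set (R * R)) : Prop :=
  exists g : R * R -> R * R,
    [/\ {within unit_circle, continuous g}, {in unit_circle &, injective g}
      & C = g @` unit_circle].

Definition dendrite (K : set (R * R)) : Prop :=
  [/\ continuum K, locally_connected_set K &
      forall C, C `<=` K -> ~ simple_closed_curve C].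

End Defs.

From HB Require Import structures.
From mathcomp Require Import all_boot all_order all_algebra.
From mathcomp Require Import all_classical all_reals all_analysis.
From mathcomp Require Import ring lra.
Import Order.TTheory GRing.Theory Num.Theory.
Import numFieldNormedType.Exports.
Local Open Scope classical_set_scope.
Local Open Scope ring_scope.
Set Implicit Arguments. Unset Strict Implicit. Unset Printing Implicit Defensive.

(* K lies in the triangle with vertices (0,0), (4,0), (2,4h), and its pieces K_j = S_j(K)
   meet only at the four points (1,0), (3,0), (2,2h), (3/2,3h), along the edges K_1-K_2,
   K_2-K_3, K_2-K_4, K_4-K_5 of a tree.  All ratios are at most 1/2, so a quantity that is
   bounded on K and can always be at least doubled by pulling back through some S_j must
   vanish.  A separation of K at distance d either splits some piece, whose preimage is then
   a separation at distance 2d, or is a union of pieces, which the tree forbids: K is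
   connected.  A simple closed curve stays connected when any point is removed, so by the
   tree structure it lies in one piece, and its preimage is a simple closed curve on which
   two given points are twice as far apart: there is none.  Local connectedness holds for
   every connected attractor of this kind: rescaled copies of connected neighbourhoods of
   the preimages of a point are connected neighbourhoods of half the size. *)

Section doubling.
Variable R : realType.

Lemma exists_expr2_gt (x : R) : exists k : nat, x < 2 ^+ k.
Proof.
exists (Num.truncn x).+1; apply: lt_le_trans (truncnS_gt x) _.
by rewrite -natrX ler_nat ltnW // ltn_expl.
Qed.

Lemma doubling_le0 (T : Type) (P : T -> Prop) (mu : T -> R) (B : R) :
  (forall t, P t -> mu t <= B) ->
  (forall t, P t -> 0 < mu t -> exists2 t', P t' & 2 * mu t <= mu t') ->
  forall t, P t -> mu t <= 0.
Proof.
move=> muB mu2 t Pt; rewrite leNgt; apply/negP => mu0.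
have grow k : exists2 t', P t' & 2 ^+ k * mu t <= mu t'.
  elim: k => [|k [t' Pt' le_t']]; first by exists t; rewrite ?expr0 ?mul1r.
  have [|t'' Pt'' le_t''] := mu2 t' Pt'.
    by apply: lt_le_trans le_t'; rewrite mulr_gt0 // exprn_gt0.
  by exists t'' => //; apply: le_trans le_t''; rewrite exprS -mulrA ler_pM2l.
have [k] := exists_expr2_gt (B / mu t); rewrite ltr_pdivrMr // => ltB.
have [t' Pt' le_t'] := grow k.
by have := lt_le_trans ltB (le_trans le_t' (muB _ Pt')); rewrite ltxx.
Qed.

End doubling.

Lemma connected_setD1_subU (T : topologicalType) (A B X : set T) (a : T) :
  closed A -> closed B -> A a -> B a -> A `&` B `<=` [set a] ->
  X `<=` A `|` B -> connected (X `\ a) -> X `<=` A \/ X `<=` B.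
Proof.
move=> cA cB Aa Ba AB XAB cX.
have sep : separated ((X `\ a) `&` A) ((X `\ a) `&` B).
  split; apply/seteqP; split => // x [].
    move=> /(closureS (@subIsetr _ _ A)); rewrite -(closure_id A).1 // => Ax.
    by move=> [[_ xa] Bx]; apply: xa; apply: AB.
  move=> [[_ xa] Ax] /(closureS (@subIsetr _ _ B)); rewrite -(closure_id B).1 //.
  by move=> Bx; apply: xa; apply: AB.
have sub : X `\ a `<=` ((X `\ a) `&` A) `|` ((X `\ a) `&` B).
  by move=> x [Xx xa]; case: (XAB x Xx) => ?; [left|right].
case: (connected_subset sep sub cX) => XaS; [left|right] => x Xx;
  have [->|xa] := pselect (x = a) => //; by have [] := XaS x (conj Xx xa).
Qed.

Lemma closed_separatedl (T : topologicalType) (A B : set T) :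
  closed (A `|` B) -> separated A B -> closed A.
Proof.
move=> cAB [clAB _]; apply/closure_id/seteqP; split; first exact: subset_closure.
move=> x Ax; have [//|Bx] : (A `|` B) x.
  by move/closure_id: cAB => ->; exact: (closureS (@subsetUl _ A B)).
by have : (closure A `&` B) x by []; rewrite clAB.
Qed.

Section plane.
Variable R : realType.
Implicit Types (p q : R * R) (r : R) (c : R * R).

Lemma open_norm_subball (U : set (R * R)) p : open U -> U p ->
  exists2 e : R, 0 < e & forall q, `|p - q| < e -> U q.
Proof.
move=> oU Up; have /nbhs_ballP[e e0 eU] : nbhs p U by exact: open_nbhs_nbhs.
by exists e => // q pq; apply: eU; rewrite -ball_normE.
Qed.

Lemma compact_closed_dist_gt0 (A B : set (R * R)) : compact A -> closed B ->
  (forall x, A x -> ~ B x) ->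
  exists2 d : R, 0 < d & forall a b, A a -> B b -> d <= `|a - b|.
Proof.
move=> cA cB AB; apply: contrapT => nd.
pose S (d : R) := [set a | A a /\ exists2 b, B b & `|a - b| < d].
have S0 d : 0 < d -> S d !=set0.
  move=> d0; apply: contrapT => S0; apply: nd; exists d => // a b Aa Bb.
  by rewrite leNgt; apply/negP => ab; apply: S0; exists a; split => //; exists b.
pose F := filter_from [set d : R | 0 < d] S.
have FF : ProperFilter F.
  apply: filter_from_proper; last exact: S0.
  apply: filter_from_filter; first by exists 1; rewrite /= ltr01.
  move=> d1 d2 d10 d20; exists (Num.min d1 d2); first by rewrite /= lt_min d10.
  move=> a [Aa [b Bb]]; rewrite lt_min => /andP[ab1 ab2].
  by split; split => //; exists b.
have FA : F A by exists 1 => //= a [].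
have [x [Ax clx]] := cA F FF FA.
have [e e0 eB] := open_norm_subball (closed_openC cB) (AB x Ax).
have e20 : 0 < e / 2 by rewrite divr_gt0.
have Fe : F (S (e / 2)) by exists (e / 2).
have [y [[_ [b Bb yb]] xy]] := clx _ _ Fe (nbhsx_ballx x _ e20).
apply: (eB b) => //; apply: le_lt_trans (ler_distD y x b) _.
by move: xy; rewrite -ball_normE /= => xy; lra.
Qed.

Definition sim r c p : R * R := r *: p + c.
Definition sim_inv r c : R * R -> R * R := sim r^-1 (- (r^-1 *: c)).

Lemma simE r c p : sim r c p = (r * p.1 + c.1, r * p.2 + c.2).
Proof. by []. Qed.

Lemma dist_sim r c p q : 0 <= r -> `|sim r c p - sim r c q| = r * `|p - q|.
Proof. by move=> r0; rewrite /sim opprD addrACA subrr addr0 -scalerBr normrZ ger0_norm. Qed.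

Lemma continuous_sim r c : continuous (sim r c).
Proof. by move=> x; apply: cvgD; [apply: cvgZ; [exact: cvg_cst|exact: cvg_id]|exact: cvg_cst]. Qed.

Lemma simK r c : r != 0 -> cancel (sim r c) (sim_inv r c).
Proof. by move=> r0 p; rewrite /sim_inv /sim scalerDr addrK scalerA mulVf // scale1r. Qed.

Lemma sim_invK r c : r != 0 -> cancel (sim_inv r c) (sim r c).
Proof.
by move=> r0 p; rewrite /sim_inv /sim scalerDr scalerN !scalerA divff // !scale1r subrK.
Qed.

End plane.

Lemma continuous_pair (R : realType) (T : topologicalType) (f g : T -> R) :
  continuous f -> continuous g -> continuous (fun x => (f x, g x)).
Proof. by move=> cf cg x; exact: (cvg_pair (cf x) (cg x)). Qed.

Section circle.
Variable R : realType.
Implicit Types (p q z w : R * R) (t : R).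
Local Notation circle := (@unit_circle R).

Definition cmul p q : R * R := (p.1 * q.1 - p.2 * q.2, p.1 * q.2 + p.2 * q.1).
Definition cconj p : R * R := (p.1, - p.2).
(* Inverse stereographic projection from (1, 0). *)
Definition circle_param t : R * R :=
  ((t ^+ 2 - 1) / (t ^+ 2 + 1), 2 * t / (t ^+ 2 + 1)).

Lemma circle10 : circle (1, 0). Proof. by rewrite /unit_circle /=; ring. Qed.
Lemma circleN10 : circle (-1, 0). Proof. by rewrite /unit_circle /=; ring. Qed.
Lemma pt10_neq_ptN10 : (1, 0) <> (-1, 0) :> R * R. Proof. by case; lra. Qed.

Lemma cmul_circle p q : circle p -> circle q -> circle (cmul p q).
Proof.
rewrite /unit_circle /= => hp hq.
have -> : (p.1 * q.1 - p.2 * q.2) ^+ 2 + (p.1 * q.2 + p.2 * q.1) ^+ 2 =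
  (p.1 ^+ 2 + p.2 ^+ 2) * (q.1 ^+ 2 + q.2 ^+ 2) by ring.
by rewrite hp hq mulr1.
Qed.

Lemma cconjK : involutive cconj.
Proof. by case=> x y; rewrite /cconj opprK. Qed.

Lemma cconj_circle q : circle q -> circle (cconj q).
Proof. by rewrite /unit_circle /= sqrrN. Qed.

Lemma cmul_conjK q : circle q -> cancel (cmul q) (cmul (cconj q)).
Proof.
rewrite /unit_circle => hq p; rewrite [RHS]surjective_pairing /cmul /cconj /=.
congr pair.
  by transitivity ((q.1 ^+ 2 + q.2 ^+ 2) * p.1); [ring|rewrite hq mul1r].
by transitivity ((q.1 ^+ 2 + q.2 ^+ 2) * p.2); [ring|rewrite hq mul1r].
Qed.

Lemma cmulr1 q : cmul q (1, 0) = q.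
Proof. by rewrite /cmul /= !mulr1 !mulr0 subr0 add0r -surjective_pairing. Qed.

Lemma circle_param_circle t : circle (circle_param t).
Proof.
have d : t ^+ 2 + 1 != 0 by rewrite gt_eqF // ltr_wpDl ?sqr_ge0.
by rewrite /unit_circle /circle_param /=; field.
Qed.

Lemma range_circle_param : range circle_param = circle `\ (1, 0).
Proof.
apply/seteqP; split => [_ [t _ <-]|[x y] [hxy /= xy1]].
  split; first exact: circle_param_circle.
  have d : t ^+ 2 + 1 != 0 by rewrite gt_eqF // ltr_wpDl ?sqr_ge0.
  by case=> e _; have := divfK d (t ^+ 2 - 1); rewrite e mul1r; lra.
have d : 1 - x != 0.
  apply/eqP => x1; apply: xy1; have {x1}x1 : x = 1 by lra.
  congr pair => //; apply/eqP; rewrite -sqrf_eq0; apply/eqP.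
  by move: hxy; rewrite /unit_circle /= x1 expr1n; lra.
have hy : y ^+ 2 = 1 - x ^+ 2 by move: hxy; rewrite /unit_circle /= => <-; ring.
have e1 : (y / (1 - x)) ^+ 2 + 1 = 2 / (1 - x) by rewrite expr_div_n hy; field.
have e2 : (y / (1 - x)) ^+ 2 - 1 = 2 * x / (1 - x) by rewrite expr_div_n hy; field.
by exists (y / (1 - x)) => //; rewrite /circle_param e1 e2; congr pair; field.
Qed.

Lemma circle_setD1_cmul q : circle q -> circle `\ q = cmul q @` (circle `\ (1, 0)).
Proof.
move=> hq; have hq' := cconj_circle hq.
have cmulK z : cmul q (cmul (cconj q) z) = z by rewrite -{1}(cconjK q) cmul_conjK.
apply/seteqP; split => [z [hz zq]|_ [w [hw w1] <-]].
  exists (cmul (cconj q) z) => //; split; first exact: cmul_circle.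
  by move=> e; apply: zq; rewrite -(cmulK z) e cmulr1.
split; first exact: cmul_circle.
by move=> e; apply: w1; apply: (can_inj (cmul_conjK hq)); rewrite cmulr1.
Qed.

Lemma continuous_circle_param_coord :
  continuous (fun t => (circle_param t).1) /\ continuous (fun t => (circle_param t).2).
Proof.
have den t : t ^+ 2 + 1 != 0 by rewrite gt_eqF // ltr_wpDl ?sqr_ge0.
have csq : continuous (fun t : R => t ^+ 2) := @exprn_continuous R 2%N.
have cinv : continuous (fun t : R => (t ^+ 2 + 1)^-1).
  by move=> t; apply: cvgV => //; apply: cvgD; [exact: csq|exact: cvg_cst].
split => t; apply: cvgM; try exact: cinv.
  by apply: cvgB; [exact: csq|exact: cvg_cst].
by apply: cvgM; [exact: cvg_cst|exact: cvg_id].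
Qed.

Lemma connected_circle_setD1 q : circle q -> connected (circle `\ q).
Proof.
move=> hq; rewrite circle_setD1_cmul // -range_circle_param image_comp.
apply: connected_continuous_connected; first by apply/connected_intervalP => ? ? _ _ ?.
have [c1 c2] := continuous_circle_param_coord.
apply/continuous_subspaceT/(@continuous_pair _ _
  (fun t => q.1 * (circle_param t).1 - q.2 * (circle_param t).2)
  (fun t => q.1 * (circle_param t).2 + q.2 * (circle_param t).1)) => t;
  [apply: cvgB|apply: cvgD]; apply: cvgM; by [exact: cvg_cst|exact: c1|exact: c2].
Qed.

Lemma connected_circle : connected circle.
Proof.
have -> : circle = (circle `\ (1, 0)) `|` (circle `\ (-1, 0)).
  apply/seteqP; split => [z hz|z [[]|[]] //].
  have [->|z1] := pselect (z = (1, 0)); last by left.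
  by right; split; [exact: circle10|exact: pt10_neq_ptN10].
apply: connectedU; [|exact: connected_circle_setD1 circle10|
  exact: connected_circle_setD1 circleN10].
exists (0, 1); do 2 split; rewrite /unit_circle /= ?expr0n ?expr1n ?add0r //; case; lra.
Qed.

End circle.

Section simple_closed_curve.
Variable R : realType.
Local Notation circle := (@unit_circle R).

Lemma simple_closed_curve_connected_setD1 (C : set (R * R)) p :
  simple_closed_curve C -> connected (C `\ p).
Proof.
move=> [g [gc ginj ->]].
have [[q hq gqp]|np] := pselect ((g @` circle) p); last first.
  have -> : g @` circle `\ p = g @` circle.
    by apply/seteqP; split => [z []//|z hz]; split => // zp; apply: np; rewrite -zp.
  exact: connected_continuous_connected (@connected_circle R) gc.
have -> : g @` circle `\ p = g @` (circle `\ q).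
  apply/seteqP; split => [z [[y hy <-] yp]|z [y [hy yq] <-]].
    by exists y => //; split => // yq; apply: yp; rewrite yq.
  split; first by exists y.
  by rewrite -gqp => /ginj; rewrite !inE => /(_ hy hq).
apply: connected_continuous_connected; first exact: connected_circle_setD1.
by apply: continuous_subspaceW gc => z [].
Qed.

Lemma simple_closed_curve_two_points (C : set (R * R)) :
  simple_closed_curve C -> exists u v, [/\ C u, C v & u <> v].
Proof.
move=> [g [_ ginj ->]].
exists (g (1, 0)), (g (-1, 0)); split.
- by exists (1, 0) => //; exact: circle10.
- by exists (-1, 0) => //; exact: circleN10.
- move/ginj; rewrite !inE => /(_ (circle10 R) (circleN10 R)); exact: pt10_neq_ptN10.
Qed.

End simple_closed_curve.

Section attractor.
Variable R : realType.
Variables (n : nat) (r : nat -> R) (c : nat -> R * R) (K : set (R * R)).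
Hypothesis r_gt0 : forall j, 0 < r j.
Hypothesis r_le_half : forall j, r j <= 2^-1.
Hypothesis K_compact : compact K.
Hypothesis K_attractor : K = \bigcup_(j in `I_n) sim (r j) (c j) @` K.
Implicit Types (p q z : R * R) (A C : set (R * R)).

Local Notation F j := (sim (r j) (c j)).
Local Notation G j := (sim_inv (r j) (c j)).
Local Notation piece j := (F j @` K).

Let r_neq0 j : r j != 0. Proof. by rewrite gt_eqF. Qed.

Lemma dist_piece_map j p q : `|F j p - F j q| = r j * `|p - q|.
Proof. by rewrite dist_sim // ltW. Qed.

Lemma dist_piece_inv j p q : `|G j p - G j q| = (r j)^-1 * `|p - q|.
Proof. by rewrite /sim_inv dist_sim // invr_ge0 ltW. Qed.

Lemma piece_sub j : (j < n)%N -> piece j `<=` K.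
Proof. by move=> jn p Pp; rewrite K_attractor; exists j. Qed.

Lemma attractor_closed : closed K.
Proof. exact: compact_closed (@norm_hausdorff _ _) K_compact. Qed.

Lemma piece_closed j : closed (piece j).
Proof.
apply: compact_closed; first exact: norm_hausdorff.
by apply: continuous_compact K_compact; apply/continuous_subspaceT/continuous_sim.
Qed.

Lemma attractor_norm_bounded : exists M : R, forall p, K p -> `|p| <= M.
Proof.
have [M [_ HM]] := compact_bounded K_compact.
by exists (M + 1) => p Kp; apply: HM p Kp; rewrite ltrDl.
Qed.

Lemma attractor_diam_bounded : exists M : R, forall p q, K p -> K q -> `|p - q| <= M.
Proof.
have [M HM] := attractor_norm_bounded; exists (M + M) => p q Kp Kq.
by apply: le_trans (ler_normB _ _) _; apply: lerD; exact: HM.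
Qed.

Lemma fixpoint_mem j z : K !=set0 -> (j < n)%N -> F j z = z -> K z.
Proof.
move=> [q0 Kq0] jn Fz; apply: contrapT => nKz.
have [e e0 eK] := open_norm_subball (closed_openC attractor_closed) nKz.
have far q : K q -> e <= `|z - q| by move=> Kq; rewrite leNgt; apply/negP => /eK.
have far0 q : K q -> 0 < `|z - q| by move=> Kq; exact: lt_le_trans e0 (far q Kq).
suff : `|z - q0|^-1 <= 0 by rewrite leNgt invr_gt0 far0.
(* The reciprocal distance to z at least doubles under F j. *)
apply: (@doubling_le0 R _ K (fun q => `|z - q|^-1) e^-1) => // [q Kq|q Kq _].
  by rewrite lef_pV2 ?posrE ?far0 ?far.
exists (F j q); first by apply: (piece_sub jn); exists q.
rewrite -{2}Fz dist_piece_map invfM ler_pM2r ?invr_gt0 ?far0 //.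
by rewrite -(invrK 2) lef_pV2 ?posrE ?invr_gt0 ?r_gt0.
Qed.

Lemma ge0_on_attractor (L : R * R -> R) :
  (exists B, forall q, K q -> - L q <= B) ->
  (forall j q, (j < n)%N -> r j * L q <= L (F j q)) ->
  forall p, K p -> 0 <= L p.
Proof.
move=> [B LB] Lr p Kp; rewrite -oppr_le0.
apply: (@doubling_le0 R _ K (fun q => - L q) B) => // q; rewrite {1}K_attractor.
move=> [j jn [q' Kq' <-]] Lq; exists q' => //.
have := Lr j q' jn; have := r_gt0 j; have := r_le_half j; nra.
Qed.

Lemma affine_ge0_on_attractor (l1 l2 l0 : R) :
  (forall j q, (j < n)%N ->
    r j * (l1 * q.1 + l2 * q.2 + l0) <= l1 * (F j q).1 + l2 * (F j q).2 + l0) ->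
  forall p, K p -> 0 <= l1 * p.1 + l2 * p.2 + l0.
Proof.
apply: ge0_on_attractor; have [M HM] := attractor_norm_bounded.
exists (`|l1| * M + `|l2| * M + `|l0|) => q /HM qM.
have le_coord (x l : R) : `|x| <= `|q| -> - (l * x) <= `|l| * M.
  move=> xq; apply: le_trans (ler_norm _) _; rewrite normrN normrM.
  exact: ler_wpM2l (le_trans xq qM).
rewrite !opprD; apply: lerD; first apply: lerD.
- by apply: le_coord; rewrite prod_normE le_max lexx.
- by apply: le_coord; rewrite prod_normE le_max lexx orbT.
- by rewrite -normrN ler_norm.
Qed.

(* The intersection graph of the pieces is connected. *)
Definition pieces_linked := forall C,
  (forall j, (j < n)%N -> piece j `<=` C \/ piece j `<=` ~` C) -> K `<=` C \/ K `<=` ~` C.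

Definition separated_by A (d : R) := [/\ 0 < d, K `&` A !=set0, K `\` A !=set0 &
  forall a b, K a -> A a -> K b -> ~ A b -> d <= `|a - b|].

Lemma separated_by_double A d : pieces_linked ->
  separated_by A d -> exists A', separated_by A' (2 * d).
Proof.
move=> linked [d0 [a [Ka Aa]] [b [Kb nAb]] dA].
have [[j jn [[_ [[qx Kqx <-] Aqx]] [_ [[qy Kqy <-] nAqy]]]]|none] :=
  pselect (exists2 j, (j < n)%N & piece j `&` A !=set0 /\ piece j `\` A !=set0).
  exists [set q | A (F j q)]; split.
  - by rewrite mulr_gt0.
  - by exists qx.
  - by exists qy.
  move=> a' b' Ka' Aa' Kb' nAb'.
  have Pa' : K (F j a') by apply: (piece_sub jn); exists a'.
  have Pb' : K (F j b') by apply: (piece_sub jn); exists b'.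
  have := dA _ _ Pa' Aa' Pb' nAb'; rewrite dist_piece_map.
  have := r_le_half j; have := r_gt0 j; have := normr_ge0 (a' - b'); nra.
have side j : (j < n)%N -> piece j `<=` A \/ piece j `<=` ~` A.
  move=> jn; have [[x [Px nAx]]|] := pselect (piece j `\` A !=set0); last first.
    by move=> nP; left => x Px; apply: contrapT => nAx; apply: nP; exists x.
  right => y Py Ay; apply: none; exists j => //; split; [by exists y|by exists x].
by case: (linked A side) => [/(_ b Kb)/nAb|/(_ a Ka)/(_ Aa)].
Qed.

Lemma connected_attractor : pieces_linked -> connected K.
Proof.
move=> linked; apply: contrapT => /connectedPn [E [E0 KE sepE]].
have disjE x : E false x -> ~ E true x.
  by move=> Ef Et; have := separated_disjoint sepE; rewrite -subset0 => /(_ x); apply.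
have EK b : E b `<=` K by rewrite KE; case: b => x Ex; [right|left].
have Ef_compact : compact (E false).
  apply: subclosed_compact K_compact (EK false).
  by apply: closed_separatedl sepE; rewrite -KE; exact: attractor_closed.
have Et_closed : closed (E true).
  apply: (@closed_separatedl _ _ (E false)); last by rewrite separatedC.
  by rewrite setUC -KE; exact: attractor_closed.
have [d d0 dE] := compact_closed_dist_gt0 Ef_compact Et_closed disjE.
have sepd : separated_by (E false) d.
  split => //.
  - by have [x Ex] := E0 false; exists x; exact: (conj (EK _ _ Ex) Ex).
  - by have [x Ex] := E0 true; exists x; exact: (conj (EK _ _ Ex) (disjE x^~ Ex)).
  - by move=> a b _ Ea; rewrite {1}KE => -[//|Eb _]; exact: dE.
have [M KM] := attractor_diam_bounded.
suff : d <= 0 by rewrite leNgt d0.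
apply: (@doubling_le0 R _ (fun t => separated_by t.1 t.2) snd M) (E false, d) sepd.
  by move=> [A e] [/= _ [a [Ka Aa]] [b [Kb nAb]] eA]; apply: le_trans (eA a b _ _ _ _) (KM a b _ _).
by move=> [A e] /(separated_by_double linked) [A' sepA'] _; exists (A', 2 * e).
Qed.

Definition connected_nbhd (e : R) y N :=
  [/\ N `<=` K, N y, connected N & forall z, N z -> `|y - z| <= e].

Definition small_connected_nbhds (e : R) := forall y, K y ->
  exists N V, connected_nbhd e y N /\ [/\ open V, V y & V `&` K `<=` N].

Lemma small_connected_nbhds_pieces e m : 0 <= e -> small_connected_nbhds e ->
  (m <= n)%N -> forall y, K y -> exists N V, connected_nbhd (e / 2) y N /\
    [/\ open V, V y & V `&` \bigcup_(j in `I_m) piece j `<=` N].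
Proof.
move=> e0 small + y Ky; elim: m => [_|m IH mn].
  exists [set y], setT; split; last by split; [exact: openT|done|move=> z [_ []]].
  split => //; [by move=> z ->|exact: connected1|].
  by move=> z ->; rewrite subrr normr0 divr_ge0.
have [Nm [Vm [[NmK Nmy Nmc Nme] [Vmo Vmy VmN]]]] := IH (ltnW mn).
have lt_Sm j : `I_m.+1 j -> j = m \/ `I_m j.
  by rewrite /= ltnS leq_eqVlt => /orP[/eqP|]; [left|right].
(* Cut away the pieces missing y; in a piece F m (K) containing y = F m q, add the
   F m-image of a connected neighbourhood of q, which is half as large. *)
have [[q Kq Fq]|nPy] := pselect (piece m y); last first.
  exists Nm, (Vm `&` ~` piece m); split => //; split => //.
    by apply: openI => //; exact/closed_openC/piece_closed.
  move=> z [[Vmz nPz] [j /lt_Sm[jm|jm] Pz]]; first by move: Pz; rewrite jm.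
  by apply: VmN; split => //; exists j.
have [N' [Vq [[N'K N'q N'c N'e] [Vqo Vqq VqN]]]] := small q Kq.
exists (Nm `|` F m @` N'), (Vm `&` G m @^-1` Vq); split; split.
- by move=> z [/NmK//|[w /N'K Kw <-]]; apply: (piece_sub mn); exists w.
- by left.
- apply: connectedU => //; first by exists y; split => //; exists q.
  by apply: connected_continuous_connected N'c _; apply/continuous_subspaceT/continuous_sim.
- move=> z [/Nme//|[w /N'e qw <-]]; rewrite -Fq dist_piece_map.
  have := r_le_half m; have := r_gt0 m; have := normr_ge0 (q - w); nra.
- by apply: openI => //; apply: open_comp => // + _; exact: continuous_sim.
- by split => //=; rewrite -Fq simK.
move=> z [[Vmz Vqz] [j /lt_Sm[jm|jm] Pz]]; last by left; apply: VmN; split => //; exists j.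
move: Pz Vqz; rewrite jm => -[w Kw <-]; rewrite /= simK // => Vqw.
by right; exists w => //; exact: VqN.
Qed.

Lemma small_connected_nbhds_half e : 0 <= e ->
  small_connected_nbhds e -> small_connected_nbhds (e / 2).
Proof.
move=> e0 small y Ky.
have [N [V [Ny [Vo Vy VN]]]] := small_connected_nbhds_pieces e0 small (leqnn n) Ky.
by exists N, V; split => //; split => //; rewrite {1}K_attractor.
Qed.

Lemma small_connected_nbhds_gt0 e : connected K -> 0 < e -> small_connected_nbhds e.
Proof.
move=> Kc e0; have [M KM] := attractor_diam_bounded; set M' := Num.max M 0.
have M'0 : 0 <= M' by rewrite le_max lexx orbT.
have small_pow k : small_connected_nbhds (M' / 2 ^+ k).
  elim: k => [|k IH].
    move=> y Ky; exists K, setT; split; split => //; last exact: openT.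
    by move=> z Kz; rewrite expr0 divr1 le_max KM.
  rewrite exprSr invfM mulrA; apply: small_connected_nbhds_half => //.
  by rewrite divr_ge0 // exprn_ge0.
have [k] := exists_expr2_gt (M' / e); rewrite ltr_pdivrMr // -ltr_pdivrMl ?exprn_gt0 //.
rewrite mulrC => lt_e y Ky; have [N [V [[NK Ny Nc Ne] NV]]] := small_pow k y Ky.
by exists N, V; split => //; split => // z /Ne /le_trans; apply; exact: ltW.
Qed.

Lemma locally_connected_attractor : connected K -> locally_connected_set K.
Proof.
move=> Kc x U Kx oU Ux; have [e e0 eU] := open_norm_subball oU Ux.
pose Bx := [set q | `|x - q| < e].
pose C := connected_component (K `&` Bx) x.
pose W := [set z | exists V, [/\ open V, V z & V `&` K `<=` C]].
have CKB : C `<=` K `&` Bx by exact: connected_component_sub.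
have CW z : C z -> W z.
  move=> Cz; have [Kz Bxz] := CKB z Cz.
  have ez : 0 < (e - `|x - z|) / 2 by rewrite divr_gt0 // subr_gt0.
  have [N [V [[NK Nz Nc Ne] [Vo Vz VN]]]] := small_connected_nbhds_gt0 Kc ez Kz.
  exists V; split => // w Vw.
  have NKB : N `<=` K `&` Bx.
    move=> u Nu; split; first exact: NK.
    apply: le_lt_trans (ler_distD z x u) _; have := Ne u Nu; move: Bxz; rewrite /Bx /=; lra.
  rewrite /C (same_connected_component Cz).
  exact: (connected_component_max Nz NKB Nc) (VN w Vw).
have WKC : W `&` K = C.
  apply/seteqP; split => [z [[V [_ Vz VC]] Kz]|z Cz]; first exact: VC.
  by split; [exact: CW|exact: (CKB z Cz).1].
exists W; split.
- rewrite openE => z [V [Vo Vz VC]]; rewrite /interior.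
  by apply: (filterS (P := V)); [move=> w Vw; exists V|exact: open_nbhs_nbhs].
- by apply: CW; apply: connected_component_refl; split => //; rewrite /Bx /= subrr normr0.
- by rewrite WKC => z /CKB[_]; exact: eU.
- by rewrite WKC; exact: component_connected.
Qed.

(* Holds when the pieces meet along a tree, adjacent pieces in a single point. *)
Definition uncut_sets_in_pieces := forall X, X `<=` K ->
  (forall p, connected (X `\ p)) -> exists2 j, (j < n)%N & X `<=` piece j.

Lemma no_simple_closed_curve_in_attractor : uncut_sets_in_pieces ->
  forall C, C `<=` K -> ~ simple_closed_curve C.
Proof.
move=> uncut C CK scc; have [u [v [Cu Cv uv]]] := simple_closed_curve_two_points scc.
pose P (t : set (R * R) * (R * R) * (R * R)) :=
  [/\ t.1.1 `<=` K, forall p, connected (t.1.1 `\ p), t.1.1 t.1.2 & t.1.1 t.2].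
have [M KM] := attractor_diam_bounded.
suff : `|u - v| <= 0 by rewrite normr_le0 subr_eq0 => /eqP.
apply: (@doubling_le0 R _ P (fun t => `|t.1.2 - t.2|) M) (C, u, v) _ => [[[X a] b]|[[X a] b]|].
- by move=> [/= XK _ Xa Xb]; apply: KM; exact: XK.
- move=> [/= XK Xc Xa Xb] _; have [j jn XP] := uncut X XK Xc.
  exists (G j @` X, G j a, G j b); last first.
    rewrite /= dist_piece_inv ler_wpM2r // -(invrK 2) lef_pV2 ?posrE ?invr_gt0 //.
  split => /=; [|move=> p|by exists a|by exists b].
    by move=> _ [x /XP [q Kq <-] <-]; rewrite simK.
  have -> : G j @` X `\ p = G j @` (X `\ F j p).
    apply/seteqP; split => [_ [[x Xx <-] xp]|_ [x [Xx xp] <-]].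
      by exists x => //; split => // xFp; apply: xp; rewrite xFp simK.
    by split; [exists x|] => // Gxp; apply: xp; rewrite -Gxp sim_invK.
  by apply: connected_continuous_connected (Xc _) _; apply/continuous_subspaceT/continuous_sim.
- by split => // p; exact: simple_closed_curve_connected_setD1.
Qed.

End attractor.

Section five_similarities.
Variable R : realType.
Local Notation h := (hh R).

(* [sim (ratio j) (shift j)] is S_(j+1). *)
Definition ratio (j : nat) : R := if j == 1%N then 2^-1 else 4^-1.

Definition shift (j : nat) : R * R :=
  match j with
  | 0 => (0, 0) | 1 => (1, 0) | 2 => (3, 0) | 3 => (1, 2 * h) | _ => (3 / 2, 3 * h)
  end.

Local Notation F j := (sim (ratio j) (shift j)).

Lemma ratio_gt0 j : 0 < ratio j.
Proof. by rewrite /ratio; case: ifP. Qed.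

Lemma ratio_le_half j : ratio j <= 2^-1.
Proof. by rewrite /ratio; case: ifP => // _; rewrite lef_pV2 ?posrE // ler_nat. Qed.

Lemma ifs_invariant_bigcup K : ifs_invariant K -> K = \bigcup_(j in `I_5) F j @` K.
Proof.
move=> KE; rewrite {1}KE.
have simF (S : R * R -> R * R) j : (forall p, S p = F j p) -> S = F j.
  by move=> SF; apply/funext.
have -> : @S1 R = F 0 by apply: simF => p; rewrite simE /S1 /ratio /=; congr pair; ring.
have -> : @S2 R = F 1 by apply: simF => p; rewrite simE /S2 /ratio /=; congr pair; ring.
have -> : @S3 R = F 2 by apply: simF => p; rewrite simE /S3 /ratio /=; congr pair; ring.
have -> : @S4 R = F 3 by apply: simF => p; rewrite simE /S4 /ratio /=; congr pair; ring.
have -> : @S5 R = F 4 by apply: simF => p; rewrite simE /S5 /ratio /=; congr pair; ring.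
apply/seteqP; split => p.
  by case=> [[[[]|]|]|] Pp; [exists 0%N|exists 1%N|exists 2%N|exists 3%N|exists 4%N].
case=> -[|[|[|[|[|j]]]]] // _ Pp;
  by [do 4 left|do 3 left; right|do 2 left; right|left; right|right].
Qed.

Lemma hh_gt0 : 0 < h.
Proof. by rewrite /hh divr_gt0 // sqrtr_gt0. Qed.

Variable K : set (R * R).
Hypothesis K_neq0 : K !=set0.
Hypothesis K_compact : compact K.
Hypothesis K_inv : ifs_invariant K.

Let K_attractor : K = \bigcup_(j in `I_5) F j @` K := ifs_invariant_bigcup K_inv.
Local Notation piece j := (F j @` K).

Lemma attractor_in_triangle p : K p ->
  [/\ 0 <= p.2, p.2 <= 2 * h * p.1 & p.2 <= 2 * h * (4 - p.1)].
Proof.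
have h0 := hh_gt0; move=> Kp.
have ge0 l1 l2 l0 : (forall j q, (j < 5)%N ->
    ratio j * (l1 * q.1 + l2 * q.2 + l0) <= l1 * (F j q).1 + l2 * (F j q).2 + l0) ->
  0 <= l1 * p.1 + l2 * p.2 + l0.
  by move=> Fge; apply: (affine_ge0_on_attractor ratio_gt0 ratio_le_half K_compact K_attractor Fge).
split.
- suff : 0 <= 0 * p.1 + 1 * p.2 + 0 by lra.
  apply: ge0 => -[|[|[|[|[|j]]]]] q // _; rewrite simE /ratio /=; nra.
- suff : 0 <= 2 * h * p.1 + (-1) * p.2 + 0 by lra.
  apply: ge0 => -[|[|[|[|[|j]]]]] q // _; rewrite simE /ratio /=; nra.
- suff : 0 <= - (2 * h) * p.1 + (-1) * p.2 + 8 * h by lra.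
  apply: ge0 => -[|[|[|[|[|j]]]]] q // _; rewrite simE /ratio /=; nra.
Qed.

Lemma attractor_vertices : [/\ K (0, 0), K (4, 0) & K (2, 4 * h)].
Proof.
have fixK j z : (j < 5)%N -> F j z = z -> K z :=
  fixpoint_mem ratio_gt0 ratio_le_half K_compact K_attractor K_neq0.
by split; [apply: (fixK 0%N)|apply: (fixK 2%N)|apply: (fixK 4%N)] => //;
  rewrite simE /ratio /=; congr pair; field.
Qed.

Lemma junction01 : piece 0 (1, 0) /\ piece 1 (1, 0).
Proof.
have [K0 K2 K4] := attractor_vertices.
by split; [exists (4, 0)|exists (0, 0)]; rewrite // simE /ratio /=; congr pair; field.
Qed.

Lemma junction12 : piece 1 (3, 0) /\ piece 2 (3, 0).
Proof.
have [K0 K2 K4] := attractor_vertices.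
by split; [exists (4, 0)|exists (0, 0)]; rewrite // simE /ratio /=; congr pair; field.
Qed.

Lemma junction13 : piece 1 (2, 2 * h) /\ piece 3 (2, 2 * h).
Proof.
have [K0 K2 K4] := attractor_vertices.
by split; [exists (2, 4 * h)|exists (4, 0)]; rewrite // simE /ratio /=; congr pair; field.
Qed.

Lemma junction34 : piece 3 (3 / 2, 3 * h) /\ piece 4 (3 / 2, 3 * h).
Proof.
have [K0 K2 K4] := attractor_vertices.
by split; [exists (2, 4 * h)|exists (0, 0)]; rewrite // simE /ratio /=; congr pair; field.
Qed.

Lemma piece0_meet :
  piece 0 `&` (piece 1 `|` piece 3 `|` piece 4 `|` piece 2) `<=` [set (1, 0)].
Proof.
have h0 := hh_gt0; move=> _ [[q Kq <-] P]; have [? ? ?] := attractor_in_triangle Kq.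
by case: P => [[[|]|]|] [q' Kq' e]; have [? ? ?] := attractor_in_triangle Kq';
  move: e; rewrite !simE /ratio /= => -[? ?]; congr pair; nra.
Qed.

Lemma piece2_meet : piece 2 `&` (piece 1 `|` piece 3 `|` piece 4) `<=` [set (3, 0)].
Proof.
have h0 := hh_gt0; move=> _ [[q Kq <-] P]; have [? ? ?] := attractor_in_triangle Kq.
by case: P => [[|]|] [q' Kq' e]; have [? ? ?] := attractor_in_triangle Kq';
  move: e; rewrite !simE /ratio /= => -[? ?]; congr pair; nra.
Qed.

Lemma piece4_meet : piece 4 `&` (piece 1 `|` piece 3) `<=` [set (3 / 2, 3 * h)].
Proof.
have h0 := hh_gt0; move=> _ [[q Kq <-] P]; have [? ? ?] := attractor_in_triangle Kq.
by case: P => [|] [q' Kq' e]; have [? ? ?] := attractor_in_triangle Kq';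
  move: e; rewrite !simE /ratio /= => -[? ?]; congr pair; nra.
Qed.

Lemma piece1_meet : piece 1 `&` piece 3 `<=` [set (2, 2 * h)].
Proof.
have h0 := hh_gt0; move=> _ [[q Kq <-] [q' Kq' e]].
have [? ? ?] := attractor_in_triangle Kq; have [? ? ?] := attractor_in_triangle Kq'.
by move: e; rewrite !simE /ratio /= => -[? ?]; congr pair; nra.
Qed.

(* Peel off the leaves [piece 0], [piece 2], [piece 4] of the tree of pieces, one junction
   point at a time, then separate [piece 1] from [piece 3]. *)
Lemma attractor_uncut_sets_in_pieces : uncut_sets_in_pieces 5 ratio shift K.
Proof.
move=> X XK Xc.
have [J01a J01b] := junction01; have [J12a J12b] := junction12.
have [J13a J13b] := junction13; have [J34a J34b] := junction34.
have cl j : closed (piece j) by exact: piece_closed.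
have X0 : X `<=` piece 0 `|` (piece 1 `|` piece 3 `|` piece 4 `|` piece 2).
  move=> x /XK; rewrite {1}K_attractor => -[[|[|[|[|[|j]]]]] // _ Px];
    by [left|right; left; left; left|right; right|right; left; left; right|
        right; left; right].
have [|X2] := connected_setD1_subU (cl 0%N)
  (closedU (closedU (closedU (cl 1%N) (cl 3%N)) (cl 4%N)) (cl 2%N))
  J01a (or_introl (or_introl (or_introl J01b))) piece0_meet X0 (Xc _).
  by exists 0%N.
rewrite setUC in X2.
have [|X4] := connected_setD1_subU (cl 2%N) (closedU (closedU (cl 1%N) (cl 3%N)) (cl 4%N))
  J12b (or_introl (or_introl J12a)) piece2_meet X2 (Xc _).
  by exists 2%N.
rewrite setUC in X4.
have [|X1] := connected_setD1_subU (cl 4%N) (closedU (cl 1%N) (cl 3%N))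
  J34b (or_intror J34a) piece4_meet X4 (Xc _).
  by exists 4%N.
have [|] := connected_setD1_subU (cl 1%N) (cl 3%N) J13a J13b piece1_meet X1 (Xc _).
  by exists 1%N.
by exists 3%N.
Qed.

Lemma attractor_pieces_linked : pieces_linked 5 ratio shift K.
Proof.
have [J01a J01b] := junction01; have [J12a J12b] := junction12.
have [J13a J13b] := junction13; have [J34a J34b] := junction34.
have from_piece0 D : (forall j, (j < 5)%N -> piece j `<=` D \/ piece j `<=` ~` D) ->
    piece 0 `<=` D -> K `<=` D.
  move=> sides P0; have spread i j J : (j < 5)%N -> piece i J -> piece j J ->
      piece i `<=` D -> piece j `<=` D.
    by move=> j5 PiJ PjJ PiD; case: (sides j j5) => // PjD; case: (PjD _ PjJ); exact: PiD.
  have P1 := spread _ 1%N _ isT J01a J01b P0.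
  have P2 := spread _ 2%N _ isT J12a J12b P1.
  have P3 := spread _ 3%N _ isT J13a J13b P1.
  have P4 := spread _ 4%N _ isT J34a J34b P3.
  by rewrite {1}K_attractor => z [[|[|[|[|[|j]]]]] // _ Pz];
    [exact: P0|exact: P1|exact: P2|exact: P3|exact: P4].
move=> C sides; case: (sides 0%N isT) => P0; [left|right]; apply: from_piece0 => //.
by move=> j /sides[]; [right; rewrite setCK|left].
Qed.

End five_similarities.

Unset Implicit Arguments.

Theorem mainTheorem2 (R : realType) (K : set (R * R)) :
  K !=set0 -> compact K -> ifs_invariant K -> dendrite K.
Proof.
move=> K0 Kc Kinv; have KA := ifs_invariant_bigcup Kinv.
have Kconn := connected_attractor (@ratio_gt0 R) (@ratio_le_half R) Kc KA
  (attractor_pieces_linked K0 Kc Kinv).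
split; first by [].
- exact: locally_connected_attractor (@ratio_gt0 R) (@ratio_le_half R) Kc KA Kconn.
- exact: no_simple_closed_curve_in_attractor (@ratio_gt0 R) (@ratio_le_half R) Kc
    (attractor_uncut_sets_in_pieces K0 Kc Kinv).
Qed.
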